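(* Let $n$ be even and $S\ge2$. Any deterministic AMPC algorithm with I/O capacity $S$ that computes $\mathrm{1v2Cycle}$ on $n$ vertices requires at least $\frac13\log_S n-\frac13\log_S 32=\Omega(\log_S n)$ rounds. In particular, if $S=n^{\epsilon}$ for $\epsilon\in(0,1)$, any such algorithm requires $\Omega(1/\epsilon)$ rounds.
   Context: Graphs on vertex set $\{1,\dots,n\}$ are encoded as $x\in\{0,1\}^N$, $N=\binom n2$, one bit per unordered pair (adjacency matrix). $\mathrm{1v2Cycle}:\Delta\to\{0,1\}$ is defined on the set $\Delta$ of graphs that are either a single $n$-cycle (value $1$) or a disjoint union of two cycles of length $n/2$ (value $0$). AMPC model with I/O capacity $S$: computation proceeds in rounds communicating through distributed data stores (DDS) $\mathcal{D}_0,\dots,\mathcal{D}_R$, each storing under each key a multiset of values (possibly empty; duplicates allowed, each value written by a unique machine). On input $x$, $\mathcal{D}_0$ consists of the pairs $(i,x_i)$, $i=1,\dots,N$. In round $r\ge1$ each machine (arbitrarily many, computationally unbounded, deterministic) adaptively queries keys of $\mathcal{D}_{r-1}$, receiving the whole multiset under the key, with later queries depending arbitrarily on earlier ones and their responses; the total number of values in responses plus the number of empty-response queries is at most $S$; it then writes at most $S$ key-value pairs to $\mathcal{D}_r$ as a function of its queries and responses. The algorithm is also run on invalid inputs $x\in\{0,1\}^N\setminus\Delta$ (a machine exceeding its budget stops and writes nothing), and in every round, on every input in $\{0,1\}^N$, at most $S$ values are written under any single key. The algorithm computes $g$ in $R$ rounds if for every $x\in\Delta$, $\mathcal{D}_R$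 contains exactly the single pair $(\textsc{answer},g(x))$. *)

From Stdlib Require Import Rdefinitions Raxioms Rpower.
From HB Require Import structures.
From mathcomp Require Import all_boot.
From mathcomp Require Import perm.

Set Implicit Arguments.
Unset Strict Implicit.
Unset Printing Implicit Defensive.

(* Graphs on the vertex set 'I_n (= {1,..,n} shifted to {0,..,n-1}),  *)
(* encoded by one bit per unordered pair {u,v}, u < v.                 *)

Definition upair (n : nat) := {p : 'I_n * 'I_n | (p.1 < p.2)%N}.
HB.instance Definition _ (n : nat) :=
  Finite.copy (upair n) {p : 'I_n * 'I_n | (p.1 < p.2)%N}.

Definition adj (n : nat) (x : {ffun upair n -> bool}) (u v : 'I_n) : bool :=
  if @insub _ (fun p : 'I_n * 'I_n => (p.1 < p.2)%N) (upair n) (u, v) is Some p then x p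
  else if @insub _ (fun p : 'I_n * 'I_n => (p.1 < p.2)%N) (upair n) (v, u) is Some p then x p
  else false.

Definition cyc_rel (m a b : nat) : bool :=
  (a != b) && ((b == (a + 1) %% m) || (a == (b + 1) %% m)).

Definition two_cyc_rel (h a b : nat) : bool :=
  ((a < h) == (b < h)) && cyc_rel h (a %% h) (b %% h).

Definition one_cycle (n : nat) (x : {ffun upair n -> bool}) : Prop :=
  exists s : {perm 'I_n}, forall u v : 'I_n, adj x (s u) (s v) = cyc_rel n u v.

Definition two_cycles (n : nat) (x : {ffun upair n -> bool}) : Prop :=
  exists s : {perm 'I_n}, forall u v : 'I_n, adj x (s u) (s v) = two_cyc_rel n./2 u v.

(* A DDS is a finite multiset of key-value pairs (a seq; its order is  *)
(* never observable by machines, see [resp]).                          *)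

Definition dds (K V : Type) := seq (K * V).

(* Response to a query of key k: the multiset of values stored under k,
   given as a multiplicity function (so no order is observable). *)
Definition resp (K V : eqType) (D : dds K V) (k : K) : V -> nat :=
  fun v => count (pred1 (k, v)) D.

Definition resp_size (K V : eqType) (D : dds K V) (k : K) : nat :=
  count (fun p => p.1 == k) D.

Inductive action (K V : Type) :=
| Query of K
| Write of seq (K * V).
Arguments Query {K V}.
Arguments Write {K V}.

(* A deterministic machine: given its history (its past queries and the
   responses received) it either issues its next query or stops and
   writes a list of key-value pairs. *)
Definition machine (K V : Type) := seq (K * (V -> nat)) -> action K V.

(* A
   machine exceeding its budget (or trying to write more than S pairs)
   stops and writes nothing.  Fuel S.+1 suffices since each query costs >= 1. *)
Fixpoint run_machine (K V : eqType) (S : nat) (D : dds K V) (m : machine K V)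
    (fuel : nat) (h : seq (K * (V -> nat))) (c : nat) : seq (K * V) :=
  match fuel with
  | 0 => [::]
  | fuel'.+1 =>
    match m h with
    | Write w => if size w <= S then w else [::]
    | Query k =>
      let c' := c + maxn 1 (resp_size D k) in
      if c' <= S then run_machine S D m fuel' (rcons h (k, resp D k)) c'
      else [::]
    end
  end.

Definition exec_machine (K V : eqType) (S : nat) (D : dds K V) (m : machine K V) :=
  run_machine S D m S.+1 [::] 0.

Definition exec_round (K V : eqType) (S : nat) (D : dds K V) (ms : seq (machine K V)) :
  dds K V := flatten [seq exec_machine S D m | m <- ms].

Definition algorithm (K V : Type) := seq (seq (machine K V)).

Definition dds0 (n : nat) (K V : eqType) (keyIdx : upair n -> K) (valBit : bool -> V)
  (x : {ffun upair n -> bool}) : dds K V :=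
  [seq (keyIdx e, valBit (x e)) | e <- enum (@predT (upair n))].

Definition dds_at (n : nat) (K V : eqType) (S : nat) (keyIdx : upair n -> K)
  (valBit : bool -> V) (alg : algorithm K V) (x : {ffun upair n -> bool}) (r : nat) :
  dds K V := foldl (exec_round S) (dds0 keyIdx valBit x) (take r alg).

Definition key_load_ok (n : nat) (K V : eqType) (S : nat) (keyIdx : upair n -> K)
  (valBit : bool -> V) (alg : algorithm K V) : Prop :=
  forall (x : {ffun upair n -> bool}) (r : nat) (k : K),
    r <= size alg -> resp_size (dds_at S keyIdx valBit alg x r) k <= S.

Definition computes_1v2Cycle (n : nat) (K V : eqType) (S : nat) (keyIdx : upair n -> K)
  (valBit : bool -> V) (answer : K) (alg : algorithm K V) : Prop :=
  forall x : {ffun upair n -> bool},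
    (one_cycle x -> dds_at S keyIdx valBit alg x (size alg) = [:: (answer, valBit true)]) /\
    (two_cycles x -> dds_at S keyIdx valBit alg x (size alg) = [:: (answer, valBit false)]).

Definition logb (b x : R) : R := Rdiv (ln x) (ln b).

Definition round_lower_bound (n S : nat) : R :=
  Rminus (Rmult (Rinv (IZR 3)) (logb (INR S) (INR n)))
         (Rmult (Rinv (IZR 3)) (logb (INR S) (IZR 32))).

From Stdlib Require Import Reals Lra FunctionalExtensionality.
From mathcomp Require Import all_boot all_order all_algebra zify perm.

(* Restrict the algorithm to the inputs [gadget Z] for Z a subset of {0,..,h-2}, h = n/2: two
   strands through h layers, joined between consecutive layers A and A+1 by rungs that cross
   exactly when A is in Z, and closed up by straight rungs from layer h-1 back to layer 0.
   Following the strands, this graph is one n-cycle when |Z| is odd and two n/2-cycles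
   otherwise, so the final content of the key [answer] computes the parity of |Z|, which has
   degree h-1 as a multilinear polynomial in the indicator vector of Z.
   On the other hand every input bit has degree at most 1 in Z, and a round multiplies by at
   most S^2 the degree of what is stored under any key: a machine's output is decided by at
   most S queries, each reading what is stored under one key, and a key receives at most S
   values, machines that write nothing under it costing nothing.  Hence h - 1 <= S^(2R). *)

Set Implicit Arguments.
Unset Strict Implicit.
Unset Printing Implicit Defensive.
Import Order.TTheory GRing.Theory Num.Theory.

Local Open Scope ring_scope.

(** * Degree of functions on the Boolean cube *)

Definition b2i (b : bool) : int := if b then 1 else 0.

Lemma b2i_and (a b : bool) : b2i (a && b) = b2i a * b2i b.
Proof. by case: a; case: b; rewrite /= ?mulr1 ?mulr0. Qed.

Lemma b2i_eq0 (b : bool) : (b2i b == 0) = ~~ b.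
Proof. by case: b. Qed.

Section CubeDegree.

Context {m : nat}.
Implicit Types (d e : nat) (f g : {set 'I_m} -> int) (z A : {set 'I_m}).

Definition deg_le d f : Prop :=
  exists2 p : seq (int * {set 'I_m}), all (fun t : int * {set 'I_m} => #|t.2| <= d)%N p &
    forall z, f z = \sum_(t <- p) t.1 * b2i (t.2 \subset z).

Lemma eq_deg_le d f g : f =1 g -> deg_le d f -> deg_le d g.
Proof. by move=> fg [p hp hf]; exists p => // z; rewrite -fg. Qed.

Lemma deg_le_leq d d' f : (d <= d')%N -> deg_le d f -> deg_le d' f.
Proof.
by move=> le_dd' [p hp hf]; exists p => //; apply/allP=> t /(allP hp)/leq_trans->.
Qed.

Lemma deg_le_cst d (c : int) : deg_le d (fun=> c).
Proof.
by exists [:: (c, set0)] => [|z]; rewrite /= ?cards0 // big_seq1 sub0set mulr1.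
Qed.

Lemma deg_le0 d f : f =1 (fun=> 0) -> deg_le d f.
Proof. by move=> f0; apply: eq_deg_le (deg_le_cst d 0) => z; rewrite f0. Qed.

Lemma deg_le_nonzero d f : (forall z, f z != 0 -> deg_le d f) -> deg_le d f.
Proof.
move=> hf; case: (pickP (fun z => f z != 0)) => [z /hf // | f0].
by apply: deg_le0 => z; apply/eqP/negbFE/f0.
Qed.

Lemma deg_le_add d f g : deg_le d f -> deg_le d g -> deg_le d (fun z => f z + g z).
Proof.
move=> [p hp hf] [q hq hg]; exists (p ++ q) => [|z]; first by rewrite all_cat hp.
by rewrite hf hg big_cat.
Qed.

Lemma deg_le_opp d f : deg_le d f -> deg_le d (fun z => - f z).
Proof.
move=> [p hp hf]; exists [seq (- t.1, t.2) | t <- p] => [|z]; first by rewrite all_map.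
by rewrite hf big_map -sumrN; apply: eq_bigr => t _; rewrite mulNr.
Qed.

Lemma deg_le_sub d f g : deg_le d f -> deg_le d g -> deg_le d (fun z => f z - g z).
Proof. by move=> hf hg; apply/deg_le_add/deg_le_opp. Qed.

Lemma deg_le_mul d e f g : deg_le d f -> deg_le e g -> deg_le (d + e) (fun z => f z * g z).
Proof.
move=> [p hp hf] [q hq hg].
exists [seq (t.1 * u.1, t.2 :|: u.2) | t <- p, u <- q] => [|z].
  apply/allP=> _ /allpairsP[[t u] [tp uq ->]] /=.
  by rewrite (leq_trans (leq_card_setU _ _)) // leq_add ?(allP hp) ?(allP hq).
rewrite hf hg big_allpairs_dep mulr_suml; apply: eq_bigr => t _.
rewrite mulr_sumr; apply: eq_bigr => u _ /=; rewrite mulrACA subUset.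
by case: (t.2 \subset z); case: (u.2 \subset z); rewrite /= ?mulr1 ?mulr0.
Qed.

Lemma deg_le_sum d (I : Type) (r : seq I) (F : I -> {set 'I_m} -> int) :
  (forall i, deg_le d (F i)) -> deg_le d (fun z => \sum_(i <- r) F i z).
Proof.
move=> hF; elim: r => [|i r IH]; first by apply: deg_le0 => z; rewrite big_nil.
by apply: eq_deg_le (deg_le_add (hF i) IH) => z; rewrite big_cons.
Qed.

Lemma deg_le_mem (i : 'I_m) (F : bool -> int) : deg_le 1 (fun z => F (i \in z)).
Proof.
exists [:: (F false, set0); (F true - F false, [set i])] => [|z].
  by rewrite /= cards0 cards1.
rewrite !big_cons big_nil sub0set sub1set /= mulr1 addr0.
by case: (i \in z); rewrite /= ?mulr1 ?mulr0 ?addr0 // addrC subrK.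
Qed.

Definition ideg_le (Y : eqType) d (g : {set 'I_m} -> Y) : Prop :=
  forall y, deg_le d (fun z => b2i (g z == y)).

Lemma deg_le_bind (Y : eqType) a b (g : {set 'I_m} -> Y) (F : Y -> {set 'I_m} -> int) :
  ideg_le a g -> (forall y, deg_le b (F y)) -> deg_le (a + b) (fun z => F (g z) z).
Proof.
move=> hg hF.
have sum_levels z : \sum_(y <- undup (codom g)) b2i (g z == y) * F y z = F (g z) z.
  rewrite (bigD1_seq (g z)) ?mem_undup ?codom_f ?undup_uniq //= eqxx mul1r big1 ?addr0 //.
  by move=> y; rewrite eq_sym => /negbTE->; rewrite mul0r.
by apply: eq_deg_le sum_levels _; apply: deg_le_sum => y; apply: deg_le_mul.
Qed.

Lemma ideg_le_bind (Y Y' : eqType) a b (g : {set 'I_m} -> Y) (F : Y -> {set 'I_m} -> Y') :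
  ideg_le a g -> (forall y, ideg_le b (F y)) -> ideg_le (a + b) (fun z => F (g z) z).
Proof.
by move=> hg hF y'; apply: (deg_le_bind (F := fun y z => b2i (F y z == y')) hg) => y; apply: hF.
Qed.

Lemma eq_ideg_le (Y : eqType) d (g1 g2 : {set 'I_m} -> Y) :
  g1 =1 g2 -> ideg_le d g1 -> ideg_le d g2.
Proof. by move=> g12 hg y; apply: eq_deg_le (hg y) => z; rewrite g12. Qed.

Lemma ideg_le_leq (Y : eqType) d d' (g : {set 'I_m} -> Y) :
  (d <= d')%N -> ideg_le d g -> ideg_le d' g.
Proof. by move=> le_dd' hg y; apply: deg_le_leq (hg y). Qed.

Lemma ideg_le_cst (Y : eqType) d (c : Y) : ideg_le d (fun=> c).
Proof. by move=> y; apply: deg_le_cst. Qed.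

Lemma ideg_le_comp (Y Y' : eqType) d (h : Y -> Y') (g : {set 'I_m} -> Y) :
  ideg_le d g -> ideg_le d (fun z => h (g z)).
Proof.
move=> hg; rewrite -[d]addn0; apply: (ideg_le_bind (F := fun y _ => h y)) => // y.
exact: ideg_le_cst.
Qed.

Lemma deg_le_pred (Y : eqType) d (P : pred Y) (g : {set 'I_m} -> Y) :
  ideg_le d g -> deg_le d (fun z => b2i (P (g z))).
Proof. by move=> /(ideg_le_comp P)/(_ true); apply: eq_deg_le => z; rewrite eqb_id. Qed.

Definition toggle (a : 'I_m) z := if a \in z then z :\ a else a |: z.

Lemma toggleK a : involutive (toggle a).
Proof.
move=> z; rewrite {2}/toggle; case: ifP => az.
  by rewrite /toggle setD11 setD1K.
by rewrite /toggle setU11 setU1K ?az.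
Qed.

Lemma odd_card_toggle a z : odd #|toggle a z| = ~~ odd #|z|.
Proof.
rewrite /toggle; case: ifP => az; last by rewrite cardsU1 az.
by rewrite [in RHS](cardsD1 a) az negbK.
Qed.

Lemma subset_toggle a z A : a \notin A -> (A \subset toggle a z) = (A \subset z).
Proof.
move=> aA; rewrite /toggle; case: ifP => az; first by rewrite subsetD1 aA andbT.
apply/idP/idP => [sAaz|/subset_trans->//]; last exact: subsetUr.
apply/subsetP => x xA; move/subsetP/(_ x xA): sAaz; rewrite !inE.
by case/orP=> // /eqP xa; rewrite -xa xA in aA.
Qed.

Lemma sum_sign_subset A :
  (#|A| < m)%N -> \sum_(z : {set 'I_m}) (-1) ^+ #|z| * b2i (A \subset z) = 0.
Proof.
move=> ltAm; have [a aA] : exists a, a \notin A.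
  apply/existsP; rewrite -[[exists _, _]]negbK negb_exists; apply/negP => /forallP Afull.
  by move: ltAm; rewrite (@eq_card _ _ 'I_m) ?card_ord ?ltnn // => x; rewrite (negbNE (Afull x)).
set s := \sum_(z : {set 'I_m}) _; suff: s = - s by lia.
rewrite {1}/s (reindex_inj (inv_inj (toggleK a))) -sumrN.
apply: eq_bigr => z _; rewrite subset_toggle // -signr_odd odd_card_toggle -[in RHS]signr_odd.
by case: (odd #|z|); rewrite ?mulN1r ?mul1r ?opprK.
Qed.

Lemma sum_sign_deg_lt d f :
  deg_le d f -> (d < m)%N -> \sum_(z : {set 'I_m}) (-1) ^+ #|z| * f z = 0.
Proof.
move=> [p hp hf] ltdm.
under eq_bigr => z _ do rewrite hf mulr_sumr.
rewrite exchange_big big_seq big1 // => t tp.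
under eq_bigr => z _ do rewrite mulrCA.
by rewrite -mulr_sumr sum_sign_subset ?mulr0 // (leq_ltn_trans (allP hp t tp)).
Qed.

Lemma sum_sign_odd :
  (0 < m)%N -> \sum_(z : {set 'I_m}) (-1) ^+ #|z| * b2i (odd #|z|) != 0.
Proof.
move=> m_gt0; rewrite (eq_bigr (fun z => - b2i (odd #|z|))); last first.
  by move=> z _; rewrite -signr_odd; case: (odd _); rewrite ?mulN1r ?mulr0 ?oppr0.
rewrite sumrN oppr_eq0 (bigD1 [set Ordinal m_gt0]) //= cards1 /=.
by rewrite gt_eqF // (lt_le_trans ltr01) // lerDl sumr_ge0 // => z _; case: (odd _).
Qed.

Lemma parity_deg d : deg_le d (fun z => b2i (odd #|z|)) -> (m <= d)%N.
Proof.
move=> hd; rewrite leqNgt; apply/negP => ltdm.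
have m_gt0 : (0 < m)%N by lia.
by move: (sum_sign_odd m_gt0); rewrite (sum_sign_deg_lt hd ltdm) eqxx.
Qed.

End CubeDegree.

(** * Level sets of outputs of bounded total length *)

Section BoundedOutputs.

Variables (m e : nat) (X : eqType) (I : Type) (F : I -> {set 'I_m} -> seq X).
Hypothesis F_deg : forall i, ideg_le e (F i).

(* An empty output is free, as [F i z == [::]] is [1 - (F i z != [::])], and every nonempty
   output uses up at least one unit of the budget [B]. *)
Lemma deg_le_mul_map_eq r B G (g : {set 'I_m} -> int) (tau : seq (seq X)) :
  deg_le G g ->
  (forall z, g z != 0 -> size (flatten [seq F i z | i <- r]) <= B)%N ->
  deg_le (G + B * e) (fun z => g z * b2i ([seq F i z | i <- r] == tau)).
Proof.
elim: r B G g tau => [|i r IH] B G g [|t tau] hg hB /=.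
- by apply: eq_deg_le (deg_le_leq (leq_addr _ _) hg) => z; rewrite mulr1.
- by apply: deg_le0 => z; rewrite mulr0.
- by apply: deg_le0 => z; rewrite mulr0.
have {}hB z : g z != 0 -> (size (F i z) + size (flatten [seq F j z | j <- r]) <= B)%N.
  by move=> /hB; rewrite size_cat.
have IH_nonempty (P : pred (seq X)) : ~~ P [::] ->
    deg_le (G + B * e) (fun z => g z * b2i (P (F i z)) * b2i ([seq F i z | i <- r] == tau)).
  move=> P0; have size_gt0 z : P (F i z) -> (0 < size (F i z))%N.
    by case: (F i z) => //; rewrite (negPf P0).
  apply: deg_le_nonzero => z0.
  rewrite !mulf_eq0 !b2i_eq0 !negb_or !negbK => /andP[/andP[gz0 /size_gt0 Fz0_gt0] _].
  case: B hB => [|B] hB; first by move: (hB z0 gz0); lia.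
  rewrite mulSn addnA; apply: IH; first by apply/deg_le_mul/deg_le_pred.
  move=> z; rewrite mulf_eq0 b2i_eq0 negb_or negbK => /andP[/hB + /size_gt0].
  lia.
case: t => [|x t].
  have hB' z : g z != 0 -> (size (flatten [seq F i z | i <- r]) <= B)%N.
    by move=> /hB; lia.
  apply: eq_deg_le (deg_le_sub (IH B G g tau hg hB') (IH_nonempty (fun s => s != [::]) isT)) => z.
  rewrite eqseq_cons b2i_and; case: (F i z == [::]) => /=.
    by rewrite mulr0 mul0r subr0 mul1r.
  by rewrite mulr1 subrr mul0r mulr0.
apply: eq_deg_le (IH_nonempty (pred1 (x :: t)) isT) => z.
by rewrite eqseq_cons b2i_and mulrA.
Qed.

Lemma ideg_le_flatten_map r B :
  (forall z, size (flatten [seq F i z | i <- r]) <= B)%N ->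
  ideg_le (B * e) (fun z => flatten [seq F i z | i <- r]).
Proof.
move=> hB; apply: (ideg_le_comp (@flatten X) (g := fun z => [seq F i z | i <- r])) => tau.
have := deg_le_mul_map_eq tau (deg_le_cst 0 1) (fun z _ => hB z).
by apply: eq_deg_le => z; rewrite mul1r.
Qed.

End BoundedOutputs.

Local Close Scope ring_scope.

(** * Degree growth along an AMPC computation *)

Section Simulation.

Variables (K V : eqType) (S : nat).
Implicit Types (D : dds K V) (k : K).

Definition content D k : seq (K * V) := [seq p <- D | p.1 == k].

Lemma resp_content D k : resp D k = fun v => count (pred1 (k, v)) (content D k).
Proof.
apply: functional_extensionality => v; rewrite count_filter.
by apply: eq_count => -[k' v'] /=; case: eqP => // -[-> _]; rewrite eqxx.
Qed.

Lemma resp_size_content D k : resp_size D k = size (content D k).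
Proof. by rewrite size_filter. Qed.

Lemma content_exec_round D ms k :
  content (exec_round S D ms) k = flatten [seq content (exec_machine S D mach) k | mach <- ms].
Proof. by rewrite /content /exec_round filter_flatten -map_comp. Qed.

Variable m : nat.
Implicit Types (DZ : {set 'I_m} -> dds K V).

(* Each query costs at least 1, so at most [S - c] more queries are answered. *)
Lemma run_machine_ideg DZ d mach :
  (forall k, ideg_le d (fun z => content (DZ z) k)) ->
  forall fuel h c, ideg_le ((S - c) * d) (fun z => run_machine S (DZ z) mach fuel h c).
Proof.
move=> DZ_deg; elim=> [|fuel IH] h c /=; first exact: ideg_le_cst.
case: (mach h) => [k|w]; last exact: ideg_le_cst.
have [le_Sc | lt_cS] := leqP S c.
  by apply: eq_ideg_le (ideg_le_cst _ [::]) => z /=; rewrite ifF // ltn_geF //; lia.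
pose step C z :=
  if c + maxn 1 (size C) <= S then
    run_machine S (DZ z) mach fuel (rcons h (k, fun v => count (pred1 (k, v)) C))
      (c + maxn 1 (size C))
  else [::].
apply: (eq_ideg_le (g1 := fun z => step (content (DZ z) k) z)).
  by move=> z; rewrite /step resp_size_content resp_content.
rewrite -(subnSK lt_cS) mulSn; apply: ideg_le_bind (DZ_deg k) _ => C.
rewrite /step; case: (boolP (c + maxn 1 (size C) <= S)) => [_ | _]; last exact: ideg_le_cst.
by apply: ideg_le_leq (IH _ _); apply: leq_mul => //; have := leq_maxl 1 (size C); lia.
Qed.

Lemma exec_round_ideg DZ d ms :
  (forall k, ideg_le d (fun z => content (DZ z) k)) ->
  (forall z k, resp_size (exec_round S (DZ z) ms) k <= S) ->
  forall k, ideg_le (S * (S * d)) (fun z => content (exec_round S (DZ z) ms) k).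
Proof.
move=> DZ_deg load k.
apply: eq_ideg_le (fun z => esym (content_exec_round _ _ k)) _.
apply: ideg_le_flatten_map => [mach | z].
  apply: (ideg_le_comp (content^~ k)).
  by have := run_machine_ideg mach DZ_deg S.+1 [::] 0; rewrite subn0.
by rewrite -(content_exec_round (DZ z)) -resp_size_content.
Qed.

Variables (n : nat) (keyIdx : upair n -> K) (valBit : bool -> V).
Hypothesis keyIdx_inj : injective keyIdx.

Lemma content_dds0 x k :
  content (dds0 keyIdx valBit x) k =
  if [pick e | keyIdx e == k] is Some e then [:: (k, valBit (x e))] else [::].
Proof.
rewrite /content /dds0 filter_map; case: pickP => [e /eqP <- | no_e].
  rewrite (eq_filter (a2 := pred1 e)) ?filter_pred1_uniq ?enum_uniq ?mem_enum //.
  by move=> e'; rewrite /= (inj_eq keyIdx_inj).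
by rewrite (eq_filter (a2 := pred0)) ?filter_pred0 // => e; rewrite /= no_e.
Qed.

Lemma dds0_ideg (x : {set 'I_m} -> {ffun upair n -> bool}) k :
  (forall e, ideg_le 1 (fun z => x z e)) ->
  ideg_le 1 (fun z => content (dds0 keyIdx valBit (x z)) k).
Proof.
move=> x_deg; apply: eq_ideg_le (fun z => esym (content_dds0 (x z) k)) _.
case: pickP => [e _ | _]; last exact: ideg_le_cst.
exact: (ideg_le_comp (fun b => [:: (k, valBit b)]) (x_deg e)).
Qed.

Lemma dds_atS alg x r : r < size alg ->
  dds_at S keyIdx valBit alg x r.+1 =
  exec_round S (dds_at S keyIdx valBit alg x r) (nth [::] alg r).
Proof. by move=> lt_r; rewrite /dds_at (take_nth [::] lt_r) foldl_rcons. Qed.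

Lemma dds_at_ideg alg (x : {set 'I_m} -> {ffun upair n -> bool}) :
  key_load_ok S keyIdx valBit alg -> (forall e, ideg_le 1 (fun z => x z e)) ->
  forall r k, r <= size alg ->
  ideg_le (S ^ (2 * r)) (fun z => content (dds_at S keyIdx valBit alg (x z) r) k).
Proof.
move=> load x_deg; elim=> [|r IH] k le_r; first by rewrite /dds_at take0; apply: dds0_ideg.
rewrite mulnS expnD -mulnA.
pose D z := dds_at S keyIdx valBit alg (x z) r.
apply: (eq_ideg_le (g1 := fun z => content (exec_round S (D z) (nth [::] alg r)) k)) => [z|].
  by rewrite dds_atS.
apply: exec_round_ideg => [k' | z k']; first exact/IH/ltnW.
by rewrite -dds_atS //; apply: load.
Qed.

End Simulation.

(** * The ladder gadget *)

Definition prefix_parity (z : nat -> bool) (k : nat) : bool := odd (count z (iota 0 k)).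

Lemma prefix_paritySn z k : prefix_parity z k.+1 = prefix_parity z k (+) z k.
Proof. by rewrite /prefix_parity -addn1 iotaD count_cat /= addn0 oddD; case: (z k). Qed.

(* Vertex [u < h.*2] sits on layer [u %% h] of strand [h <= u].  The rung between layers [A] and
   [A.+1] crosses the strands iff [z A]; the closing rungs between layers [h.-1] and [0] cross
   them iff [t]. *)
Definition ladder h (z : nat -> bool) (t : bool) (A : nat) (a : bool) (B : nat) (b : bool) :=
  [|| ((B == A.+1) || (A == B.+1)) && (a (+) b == z (minn A B)),
      [&& A == h.-1, B == 0 & a (+) b == t]
    | [&& B == h.-1, A == 0 & a (+) b == t]].

(* Swapping the strands of every layer preceded by an odd number of crossings removes all the
   crossings and moves their parity to the closing rungs. *)
Lemma ladder_untwist h z t A a B b (p := prefix_parity z) :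
  ladder h z t A (p A (+) a) B (p B (+) b) = ladder h (fun=> false) (t (+) p h.-1) A a B b.
Proof.
rewrite {}/p /ladder; congr (_ || (_ || _)).
- case: (B =P A.+1) => [->|_]; first rewrite (minn_idPl (leqnSn A)) prefix_paritySn.
    by case: (prefix_parity z A); case: (z A); case: a; case: b.
  case: (A =P B.+1) => [->|_] //; rewrite (minn_idPr (leqnSn B)) prefix_paritySn.
  by case: (prefix_parity z B); case: (z B); case: a; case: b.
- case: (A =P h.-1) => [->|_] //; case: (B =P 0) => [->|_] //=.
  by case: (prefix_parity z h.-1); case: a; case: b; case: t.
- case: (B =P h.-1) => [->|_] //; case: (A =P 0) => [->|_] //=.
  by case: (prefix_parity z h.-1); case: a; case: b; case: t.
Qed.

Definition ladder_rel (h : nat) (z : nat -> bool) (t : bool) : rel nat :=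
  fun u v => ladder h z t (u %% h) (h <= u) (v %% h) (h <= v).

Lemma ladder_relC h z t : symmetric (ladder_rel h z t).
Proof.
move=> u v; rewrite /ladder_rel /ladder minnC [(h <= u) (+) _]addbC [X in X && _]orbC.
by congr (_ || _); apply: orbC.
Qed.

Lemma ladder_rel_irr h z : 2 <= h -> irreflexive (ladder_rel h z false).
Proof.
move=> h_ge2 u; rewrite /ladder_rel /ladder addbb (ltn_eqF (ltnSn _)) /= orbb andbT.
by apply/andP => -[/eqP-> /eqP]; lia.
Qed.

Lemma modn_layer h A (a : bool) : A < h -> (A + a * h) %% h = A.
Proof. by move=> ltAh; case: a; rewrite ?mul1n ?mul0n ?addn0 ?modnDr modn_small. Qed.

Lemma leq_layer h A (a : bool) : A < h -> (h <= A + a * h) = a.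
Proof. by case: a => /=; lia. Qed.

Lemma ladder_rel_layers h z t A (a : bool) B (b : bool) : A < h -> B < h ->
  ladder_rel h z t (A + a * h) (B + b * h) = ladder h z t A a B b.
Proof. by move=> ltAh ltBh; rewrite /ladder_rel !modn_layer ?leq_layer. Qed.

Lemma layer_decomp h u : u < h.*2 -> u %% h + (h <= u) * h = u.
Proof.
move=> lt_u2h; case: (leqP h u) => [le_hu | lt_uh]; last by rewrite mul0n addn0 modn_small.
by rewrite -[in u %% h](subnK le_hu) modnDr modn_small; lia.
Qed.

Lemma modS_small u N : u < N -> u.+1 %% N = if u.+1 == N then 0 else u.+1.
Proof. by move=> ltuN; case: eqP => [->|ne]; rewrite ?modnn // modn_small //; lia. Qed.

Lemma cyc_rel_ladder h A (a : bool) B (b : bool) : 2 <= h -> A < h -> B < h ->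
  cyc_rel h.*2 (A + a * h) (B + b * h) = ladder h (fun=> false) true A a B b.
Proof.
move=> h_ge2 ltAh ltBh; rewrite /cyc_rel /ladder !addn1 -addnn.
rewrite !modS_small; try by case: (a); case: (b); lia.
case: a; case: b; rewrite /= ?mul1n ?mul0n ?addn0;
  do 2 case: ifP => /eqP ?; apply/idP/idP => ?; lia.
Qed.

Lemma two_cyc_rel_ladder h A (a : bool) B (b : bool) : 2 <= h -> A < h -> B < h ->
  two_cyc_rel h (A + a * h) (B + b * h) = ladder h (fun=> false) false A a B b.
Proof.
move=> h_ge2 ltAh ltBh; rewrite /two_cyc_rel /cyc_rel /ladder !modn_layer // !addn1.
rewrite !modS_small //.
case: a; case: b; rewrite /= ?mul1n ?mul0n ?addn0;
  do 2 case: ifP => /eqP ?; apply/idP/idP => ?; lia.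
Qed.

Definition untwist h (z : nat -> bool) (u : nat) : nat :=
  u %% h + (prefix_parity z (u %% h) (+) (h <= u)) * h.

Lemma untwist_lt h z u : 0 < h -> untwist h z u < h.*2.
Proof.
by move=> h_gt0; have := ltn_pmod u h_gt0; rewrite /untwist -addnn; case: (_ (+) _) => /=; lia.
Qed.

Lemma untwistK h z u : 0 < h -> u < h.*2 -> untwist h z (untwist h z u) = u.
Proof.
move=> h_gt0 lt_u2h; rewrite {1}/untwist modn_layer ?leq_layer ?ltn_pmod //.
by rewrite addbA addbb /= layer_decomp.
Qed.

Lemma ladder_rel_untwist h z t u v : 0 < h ->
  ladder_rel h z t (untwist h z u) (untwist h z v) =
  ladder_rel h (fun=> false) (t (+) prefix_parity z h.-1) u v.
Proof. by move=> h_gt0; rewrite ladder_rel_layers ?ltn_pmod // ladder_untwist. Qed.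

Lemma adj_rel n (f : rel nat) (x : {ffun upair n -> bool}) :
  symmetric f -> irreflexive f -> (forall e : upair n, x e = f (val e).1 (val e).2) ->
  forall u v : 'I_n, adj x u v = f u v.
Proof.
move=> fC f_irr x_f u v; rewrite /adj.
have insub_none (p : 'I_n * 'I_n) :
    ~~ (p.1 < p.2) -> @insub _ (fun q : 'I_n * 'I_n => q.1 < q.2) (upair n) p = None.
  exact: (@insubN _ (fun q : 'I_n * 'I_n => q.1 < q.2) (upair n)).
case: (ltngtP u v) => [lt_uv | lt_vu | eq_uv].
- by rewrite insubT /= x_f.
- by rewrite insub_none /= -?leqNgt ?(ltnW lt_vu) // insubT /= x_f fC.
- by rewrite (val_inj eq_uv) f_irr !insub_none //= ltnn.
Qed.

Definition bits m (Z : {set 'I_m}) (k : nat) : bool :=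
  if insub k is Some i then i \in Z else false.

Lemma prefix_parity_bits m (Z : {set 'I_m}) : prefix_parity (bits Z) m = odd #|Z|.
Proof.
rewrite /prefix_parity -val_enum_ord count_map (eq_count (a2 := mem Z)) => [|i].
  by rewrite -sum1_count -sum1_card big_enum_cond.
by rewrite /= /bits valK.
Qed.

Lemma ideg_le_bits m (Y : eqType) k (G : bool -> Y) :
  ideg_le 1 (fun Z : {set 'I_m} => G (bits Z k)).
Proof.
rewrite /bits; case: insubP => [i _ _ | _]; last exact: ideg_le_cst.
by move=> y; apply: (deg_le_mem i (fun b => b2i (G b == y))).
Qed.

Section Gadget.

Variables n h : nat.
Hypotheses (n_eq : n = h.*2) (h_gt1 : 1 < h).

Definition gadget (Z : {set 'I_h.-1}) : {ffun upair n -> bool} :=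
  [ffun e : upair n => ladder_rel h (bits Z) false (val e).1 (val e).2].

Lemma gadget_ideg e : ideg_le 1 (fun Z => gadget Z e).
Proof.
(* The bit of [e] only reads the crossing bit of its own rung. *)
pose G c := ladder_rel h (fun=> c) false (val e).1 (val e).2.
apply: eq_ideg_le (ideg_le_bits _ (minn ((val e).1 %% h) ((val e).2 %% h)) G) => Z.
by rewrite ffunE.
Qed.

Lemma ord_lt_double (u : 'I_n) : u < h.*2.
Proof. by rewrite -n_eq. Qed.

Lemma adj_gadget Z (u v : 'I_n) : adj (gadget Z) u v = ladder_rel h (bits Z) false u v.
Proof.
apply: adj_rel => [||e]; [exact: ladder_relC | exact: ladder_rel_irr | by rewrite ffunE].
Qed.

Definition untwist_ord (Z : {set 'I_h.-1}) (u : 'I_n) : 'I_n := insubd u (untwist h (bits Z) u).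

Lemma val_untwist_ord Z u : val (untwist_ord Z u) = untwist h (bits Z) u.
Proof. by rewrite val_insubd [n in _ < n]n_eq untwist_lt // ltnW. Qed.

Lemma untwist_ordK Z : involutive (untwist_ord Z).
Proof. by move=> u; apply: val_inj; rewrite !val_untwist_ord untwistK ?ord_lt_double // ltnW. Qed.

Lemma adj_gadget_untwist Z (u v : 'I_n) :
  adj (gadget Z) (untwist_ord Z u) (untwist_ord Z v) = ladder_rel h (fun=> false) (odd #|Z|) u v.
Proof. by rewrite adj_gadget !val_untwist_ord ladder_rel_untwist ?prefix_parity_bits // ltnW. Qed.

Lemma cyc_rel_ord (u v : 'I_n) : cyc_rel n u v = ladder_rel h (fun=> false) true u v.
Proof.
have -> : cyc_rel n = cyc_rel h.*2 by rewrite n_eq.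
rewrite -[in LHS](layer_decomp (ord_lt_double u)) -[in LHS](layer_decomp (ord_lt_double v)).
by rewrite cyc_rel_ladder // ltn_pmod // ltnW.
Qed.

Lemma two_cyc_rel_ord (u v : 'I_n) : two_cyc_rel n./2 u v = ladder_rel h (fun=> false) false u v.
Proof.
have -> : n./2 = h by rewrite n_eq doubleK.
rewrite -[in LHS](layer_decomp (ord_lt_double u)) -[in LHS](layer_decomp (ord_lt_double v)).
by rewrite two_cyc_rel_ladder // ltn_pmod // ltnW.
Qed.

Lemma gadget_one_cycle (Z : {set 'I_h.-1}) : odd #|Z| -> one_cycle (gadget Z).
Proof.
move=> oddZ; exists (perm (inv_inj (untwist_ordK Z))) => u v.
by rewrite !permE adj_gadget_untwist oddZ cyc_rel_ord.
Qed.

Lemma gadget_two_cycles (Z : {set 'I_h.-1}) : ~~ odd #|Z| -> two_cycles (gadget Z).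
Proof.
move=> /negPf evenZ; exists (perm (inv_inj (untwist_ordK Z))) => u v.
by rewrite !permE adj_gadget_untwist evenZ two_cyc_rel_ord.
Qed.

End Gadget.

(** * The round lower bound *)

Lemma rounds_lower_bound n h S (K V : eqType) (keyIdx : upair n -> K) (valBit : bool -> V)
    (answer : K) (alg : algorithm K V) :
  n = h.*2 -> 1 < h -> injective keyIdx -> injective valBit ->
  key_load_ok S keyIdx valBit alg -> computes_1v2Cycle S keyIdx valBit answer alg ->
  h.-1 <= S ^ (2 * size alg).
Proof.
move=> n_eq h_gt1 keyIdx_inj valBit_inj load computes; apply: (parity_deg (m := h.-1)).
have := dds_at_ideg keyIdx_inj load (gadget_ideg h) answer (leqnn _) [:: (answer, valBit true)].
apply: eq_deg_le => Z; congr b2i.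
have [oddZ | evenZ] := boolP (odd #|Z|).
  by rewrite (proj1 (computes _) (gadget_one_cycle n_eq h_gt1 oddZ)) /= !eqxx.
rewrite (proj2 (computes _) (gadget_two_cycles n_eq h_gt1 evenZ)) /= eqxx.
by apply/eqP => -[/valBit_inj].
Qed.

Local Open Scope R_scope.

Lemma INR_expn a k : INR (a ^ k) = INR a ^ k.
Proof. by elim: k => [|k IH] //; rewrite expnS mult_INR IH. Qed.

Lemma ln_le x y : 0 < x -> x <= y -> ln x <= ln y.
Proof.
move=> x_gt0 /Rle_lt_or_eq_dec[lt_xy | ->]; last exact: Rle_refl.
exact/Rlt_le/ln_increasing.
Qed.

Lemma round_lower_bound_le n S r :
  (2 <= S)%N -> (n <= 32 * S ^ (3 * r))%N -> round_lower_bound n S <= INR r.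
Proof.
move=> S_ge2 n_le.
have S_gt1 : 1 < INR S by apply: lt_1_INR; lia.
have lnS_gt0 : 0 < ln (INR S) by rewrite -ln_1; apply: ln_increasing; lra.
have Sr_ge1 : 1 <= INR S ^ (3 * r) by apply: pow_R1_Rle; lra.
have ln_n : ln (INR n) <= ln (IZR 32 * INR S ^ (3 * r)).
  case: n n_le => [_ | n n_le].
    (* Stdlib's [ln] is [0] on nonpositive reals. *)
    rewrite [ln (INR 0)]/ln; case: Rlt_dec => [/Rlt_irrefl[] | _].
    by rewrite -ln_1; apply: ln_le; lra.
  apply: ln_le; first by apply: lt_0_INR; lia.
  have -> : IZR 32 = INR 32 by rewrite INR_IZR_INZ.
  by rewrite -INR_expn -mult_INR; apply: le_INR; lia.
rewrite ln_mult ?ln_pow ?mult_INR in ln_n; try lra.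
apply: (Rmult_le_reg_r (3 * ln (INR S))); first lra.
have -> : round_lower_bound n S * (3 * ln (INR S)) = ln (INR n) - ln (IZR 32).
  by rewrite /round_lower_bound /logb; field; lra.
have three : INR 3 = 3 by rewrite /=; lra.
by rewrite three in ln_n; lra.
Qed.

Local Close Scope R_scope.

Theorem theorem4p7 (n S : nat) (K V : eqType)
  (keyIdx : upair n -> K) (valBit : bool -> V) (answer : K) (alg : algorithm K V) :
  ~~ odd n ->
  2 <= S ->
  injective keyIdx ->
  injective valBit ->
  key_load_ok S keyIdx valBit alg ->
  computes_1v2Cycle S keyIdx valBit answer alg ->
  Rle (round_lower_bound n S) (INR (size alg)).
Proof.
move=> n_even S_ge2 keyIdx_inj valBit_inj load computes.
apply: round_lower_bound_le => //.
have S_exp_pos : 0 < S ^ (2 * size alg) by rewrite expn_gt0; lia.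
have S_exp_mono : S ^ (2 * size alg) <= S ^ (3 * size alg) by rewrite leq_pexp2l; lia.
have [n_small | n_large] := leqP n 32; first lia.
have n_eq : n = n./2.*2 by rewrite -[in LHS](odd_double_half n) (negPf n_even).
have h_gt1 : 1 < n./2 by lia.
have := rounds_lower_bound n_eq h_gt1 keyIdx_inj valBit_inj load computes.
lia.
Qed.
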